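(* Let $\mathcal{V}$ be a non-trivial quantale, and let $\mathsf{F},\mathsf{G}\colon\mathbf{Set}\to\mathbf{Set}$ be functors with Kantorovich liftings $\overline{\mathsf{F}}$ and $\overline{\mathsf{G}}$ to $\mathbf{Cat}(\mathcal{V})$, respectively. Then the composite $\overline{\mathsf{G}}\,\overline{\mathsf{F}}$ is a Kantorovich lifting of $\mathsf{G}\mathsf{F}$.
   Context: A quantale $(\mathcal{V},\otimes,k)$ is a complete lattice with commutative monoid structure, each $u\otimes-$ preserving joins, $\hom(u,-)$ its right adjoint; non-trivial: $\bot\ne\top$. $\mathcal{V}$-categories $(X,a)$: $k\le a(x,x)$, $a(x,y)\otimes a(y,z)\le a(x,z)$; $\mathcal{V}$-functors: $a(x,y)\le b(fx,fy)$; category $\mathbf{Cat}(\mathcal{V})$ with forgetful functor $|-|$. A lifting of $\mathsf{F}$ is a functor $\overline{\mathsf{F}}$ on $\mathbf{Cat}(\mathcal{V})$ with $|\overline{\mathsf{F}}-|=\mathsf{F}|-|$. $\mathcal{V}$ denotes $(\mathcal{V},\hom)$, $\mathcal{V}^\kappa$ has $[f,g]=\bigwedge_i\hom(f(i),g(i))$. A $\kappa$-ary $\mathcal{V}$-valued predicate lifting for $\mathsf{F}$ is a natural transformation $\mathbf{Set}(-,\mathcal{V}^\kappa)\to\mathbf{Set}(\mathsf{F}-,\mathcal{V})$; the Kantorovich lifting $\mathsf{F}^{\Lambda}$ of a class $\Lambda$ sends $(X,a)$ to $\mathsf{F}X$ with structure $\bigwedge\hom(\lambda_X(f)(\mathfrak{x}),\lambda_X(f)(\mathfrak{y}))$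 over $\kappa$-ary $\lambda\in\Lambda$ and $\mathcal{V}$-functors $f\colon(X,a)\to\mathcal{V}^\kappa$; a lifting is Kantorovich if it equals $\mathsf{F}^{\Lambda}$ for some class $\Lambda$. *)

Set Implicit Arguments.

Unset Strict Implicit.
From Stdlib Require Import FunctionalExtensionality.

Record quantale := Quantale {
  qT :> Type;
  qle : qT -> qT -> Prop;
  qle_refl : forall x, qle x x;
  qle_trans : forall x y z, qle x y -> qle y z -> qle x z;
  qle_antisym : forall x y, qle x y -> qle y x -> x = y;
  qsup : (qT -> Prop) -> qT;
  qsup_ub : forall (S : qT -> Prop) x, S x -> qle x (qsup S);
  qsup_least : forall (S : qT -> Prop) y, (forall x, S x -> qle x y) -> qle (qsup S) y;
  qten : qT -> qT -> qT;
  qk : qT;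
  qten_assoc : forall x y z, qten x (qten y z) = qten (qten x y) z;
  qten_comm : forall x y, qten x y = qten y x;
  qten_unit : forall x, qten qk x = x;
  qten_sup : forall u (S : qT -> Prop),
      qten u (qsup S) = qsup (fun y => exists x, S x /\ y = qten u x);
  qhom : qT -> qT -> qT;
  qhom_adj : forall u v w, qle (qten u w) v <-> qle w (qhom u v)
}.
Arguments qle {q} _ _.
Arguments qsup {q} _.
Arguments qten {q} _ _.
Arguments qk {q}.
Arguments qhom {q} _ _.

Section Q.
Variable V : quantale.

Definition qinf (S : V -> Prop) : V := qsup (fun w => forall s, S s -> qle w s).
Definition qbot : V := qsup (fun _ => False).
Definition qtop : V := qsup (fun _ => True).
Definition nontrivial : Prop := qbot <> qtop.

Definition is_vcat (X : Type) (a : X -> X -> V) : Prop :=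
  (forall x, qle qk (a x x)) /\
  (forall x y z, qle (qten (a x y) (a y z)) (a x z)).

Definition is_vfunctor (X Y : Type) (a : X -> X -> V) (b : Y -> Y -> V)
  (f : X -> Y) : Prop := forall x y, qle (a x y) (b (f x) (f y)).

Definition powV (kappa : Type) (f g : kappa -> V) : V :=
  qinf (fun r => exists i, r = qhom (f i) (g i)).
End Q.

Record functor := Functor {
  fobj :> Type -> Type;
  fmap : forall A B : Type, (A -> B) -> fobj A -> fobj B;
  fmap_id : forall A (t : fobj A), fmap (fun a : A => a) t = t;
  fmap_comp : forall A B C (f : A -> B) (g : B -> C) (t : fobj A),
      fmap (fun a => g (f a)) t = fmap g (fmap f t)
}.
Arguments fmap f {A B} _ _ : rename.

Definition fcomp (G F : functor) : functor.
Proof.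
  refine (@Functor (fun X => G (F X)) (fun A B h t => fmap G (fmap F h) t) _ _).
  - intros A t.
    replace (fmap F (fun a : A => a)) with (fun u : F A => u).
    + apply fmap_id.
    + apply functional_extensionality; intro u; symmetry; apply fmap_id.
  - intros A B C f g t.
    replace (fmap F (fun a => g (f a))) with (fun u => fmap F g (fmap F f u)).
    + apply fmap_comp.
    + apply functional_extensionality; intro u; symmetry; apply fmap_comp.
Defined.

Section Lift.
Variable V : quantale.

(** * Liftings: since |Fbar -| = F |-| on objects and morphisms, a lifting
    of F amounts to assigning to each V-category structure a on X a
    V-category structure on F X, such that F f is a V-functor whenever f is. *)
Definition lifting_on (F : functor) :=
  forall X : Type, (X -> X -> V) -> F X -> F X -> V.

Definition is_lifting (F : functor) (L : lifting_on F) : Prop :=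
  (forall X (a : X -> X -> V), is_vcat a -> is_vcat (L X a)) /\
  (forall X Y (a : X -> X -> V) (b : Y -> Y -> V) (f : X -> Y),
      is_vcat a -> is_vcat b -> is_vfunctor a b f ->
      is_vfunctor (L X a) (L Y b) (fmap F f)).

Definition lift_comp (G F : functor) (LG : lifting_on G) (LF : lifting_on F)
  : lifting_on (fcomp G F) := fun X a => LG (F X) (LF X a).

(** * kappa-ary V-valued predicate liftings:
    natural transformations Set(-, V^kappa) -> Set(F-, V) *)
Record predlift (F : functor) (kappa : Type) := PredLift {
  pl :> forall X : Type, (X -> kappa -> V) -> F X -> V;
  pl_nat : forall X Y (h : X -> Y) (f : Y -> kappa -> V) (t : F X),
      pl (fun x => f (h x)) t = pl f (fmap F h t)
}.

Record plclass (F : functor) := PLClass {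
  pc_idx : Type;
  pc_arity : pc_idx -> Type;
  pc_lift : forall i, predlift F (pc_arity i)
}.
Arguments pc_idx {F} p.
Arguments pc_arity {F} p i.
Arguments pc_lift {F} p i.

Definition kantorovich (F : functor) (Lam : plclass F) : lifting_on F :=
  fun X a s t =>
    qinf (fun r => exists (i : pc_idx Lam) (f : X -> pc_arity Lam i -> V),
            is_vfunctor a (@powV V (pc_arity Lam i)) f /\
            r = qhom (pc_lift Lam i X f s) (pc_lift Lam i X f t)).

Definition is_kantorovich_lifting (F : functor) (L : lifting_on F) : Prop :=
  is_lifting L /\
  exists Lam : plclass F,
    forall X (a : X -> X -> V), is_vcat a ->
      forall s t, L X a s t = kantorovich Lam a s t.
End Lift.

(** Write [Gbar = G^LamG] and [Fbar = F^LamF]. For [GF] take the predicate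
    liftings [f |-> lam (g o F f)], where [lam] is in [LamG] and [g] is a
    V-functor [Fbar (V^Z) -> V^kappa]. Since [Fbar f] is a V-functor, these
    are among the tests defining [Gbar Fbar], which gives one inequality.
    Conversely, a V-functor [g : Fbar (X, a) -> V^kappa] factors as
    [g' o F y] through the Yoneda map [y : X -> V^X]: [V^kappa] is injective,
    and [Fbar y] reflects distances because a Kantorovich lifting inherits
    this property of [y], again by injectivity of [V^kappa]. *)

From Stdlib Require Import FunctionalExtensionality.

Section QuantaleFacts.
Context {V : quantale}.

Lemma qten_monr (u x y : V) : qle x y -> qle (qten u x) (qten u y).
Proof.
  intro Hxy. apply qhom_adj. eapply qle_trans; [exact Hxy|].
  apply qhom_adj, qle_refl.
Qed.

Lemma qten_monl (u x y : V) : qle x y -> qle (qten x u) (qten y u).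
Proof. intro Hxy. rewrite (qten_comm x), (qten_comm y). now apply qten_monr. Qed.

Lemma qten_unit_r (x : V) : qten x qk = x.
Proof. rewrite qten_comm. apply qten_unit. Qed.

Lemma qinf_lb (S : V -> Prop) s : S s -> qle (qinf S) s.
Proof. intro Hs. apply qsup_least. intros w Hw. now apply Hw. Qed.

Lemma qinf_glb (S : V -> Prop) w : (forall s, S s -> qle w s) -> qle w (qinf S).
Proof. intro Hw. now apply qsup_ub. Qed.

Lemma qten_sup_le (S : V -> Prop) c y :
  (forall x, S x -> qle (qten c x) y) -> qle (qten c (qsup S)) y.
Proof.
  intro Hy. rewrite qten_sup. apply qsup_least. intros z [x [Hx ->]]. now apply Hy.
Qed.

Lemma powV_le {kappa : Type} (f g : kappa -> V) w :
  (forall i, qle (qten (f i) w) (g i)) -> qle w (powV f g).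
Proof. intro Hw. apply qinf_glb. intros r [i ->]. now apply qhom_adj. Qed.

Lemma powV_ev {kappa : Type} (f g : kappa -> V) i :
  qle (qten (f i) (powV f g)) (g i).
Proof. apply qhom_adj, qinf_lb. now exists i. Qed.

Lemma powV_vcat (kappa : Type) : is_vcat (@powV V kappa).
Proof.
  split.
  - intro f. apply powV_le. intro i. rewrite qten_unit_r. apply qle_refl.
  - intros f g h. apply powV_le. intro i. rewrite qten_assoc.
    eapply qle_trans; [apply qten_monl, powV_ev|]. apply powV_ev.
Qed.

Lemma powV_extend {A B : Type} {a : A -> A -> V} {b : B -> B -> V} {e : A -> B}
  {kappa : Type} {g : A -> kappa -> V} :
  is_vcat b -> (forall x y, qle (b (e x) (e y)) (a x y)) ->
  is_vfunctor a (@powV V kappa) g ->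
  exists g' : B -> kappa -> V,
    is_vfunctor b (@powV V kappa) g' /\ forall x, g' (e x) = g x.
Proof.
  intros [b_refl b_trans] e_refl g_vf.
  (* the left Kan extension [g' u k = sup_x g x k (x) b (e x) u] *)
  exists (fun u k => qsup (fun v => exists x, v = qten (g x k) (b (e x) u))).
  split.
  - intros u w. apply powV_le. intro k. rewrite qten_comm.
    apply qten_sup_le. intros v [x ->].
    rewrite qten_comm, <- qten_assoc.
    eapply qle_trans; [apply qten_monr, b_trans|].
    apply qsup_ub. now exists x.
  - intro x. apply functional_extensionality. intro k. apply qle_antisym.
    + apply qsup_least. intros v [x' ->].
      eapply qle_trans; [apply qten_monr, e_refl|].
      eapply qle_trans; [apply qten_monr, g_vf|]. apply powV_ev.
    + eapply qle_trans; [|apply qsup_ub; exists x; reflexivity].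
      eapply qle_trans; [|apply qten_monr, b_refl].
      rewrite qten_unit_r. apply qle_refl.
Qed.

Lemma yoneda_vfunctor {X : Type} {a : X -> X -> V} :
  is_vcat a -> is_vfunctor a (@powV V X) (fun x z => a z x).
Proof. intros [_ a_trans] x y. apply powV_le. intro z. apply a_trans. Qed.

Lemma yoneda_reflect {X : Type} {a : X -> X -> V} : is_vcat a ->
  forall x y, qle (@powV V X (fun z => a z x) (fun z => a z y)) (a x y).
Proof.
  intros [a_refl _] x y.
  eapply qle_trans; [|apply (powV_ev (fun z => a z x) (fun z => a z y) x)].
  eapply qle_trans; [|apply qten_monl, (a_refl x)].
  rewrite qten_unit. apply qle_refl.
Qed.

End QuantaleFacts.

Lemma lift_comp_is_lifting {V : quantale} {F G : functor}
  {LF : lifting_on V F} {LG : lifting_on V G} :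
  is_lifting LF -> is_lifting LG -> is_lifting (lift_comp LG LF).
Proof.
  intros [LF_vcat LF_vf] [LG_vcat LG_vf]. split.
  - intros X a a_vcat. now apply LG_vcat, LF_vcat.
  - intros X Y a b f a_vcat b_vcat f_vf. apply LG_vf; auto.
Qed.

Lemma kantorovich_reflect {V : quantale} {F : functor} (Lam : plclass V F)
  {X Y : Type} {a : X -> X -> V} {b : Y -> Y -> V} {e : X -> Y} :
  is_vcat b -> (forall x y, qle (b (e x) (e y)) (a x y)) ->
  forall u v, qle (kantorovich Lam b (fmap F e u) (fmap F e v))
                  (kantorovich Lam a u v).
Proof.
  intros b_vcat e_refl u v. apply qinf_glb. intros r [i [f [f_vf ->]]].
  destruct (powV_extend b_vcat e_refl f_vf) as [f' [f'_vf f'_ext]].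
  apply qinf_lb. exists i, f'. split; [exact f'_vf|].
  rewrite <- !pl_nat.
  replace (fun x => f' (e x)) with f; [reflexivity|].
  apply functional_extensionality. intro x. now rewrite f'_ext.
Qed.

Section Composite.
Context {V : quantale} {F G : functor}.
Variable LF : lifting_on V F.
Hypothesis LF_kantorovich : is_kantorovich_lifting LF.
Variable LamG : plclass V G.

Record comp_idx := CompIdx {
  ci_lift : pc_idx LamG;
  ci_arity : Type;
  ci_fun : F (ci_arity -> V) -> pc_arity (p:=LamG) ci_lift -> V;
  ci_fun_vf : is_vfunctor (LF (ci_arity -> V) (@powV V ci_arity)) (@powV V _) ci_fun
}.

Definition comp_pl (j : comp_idx) (X : Type) (h : X -> ci_arity j -> V)
  (t : fcomp G F X) : V :=
  pc_lift (p:=LamG) (ci_lift j) (F X) (fun u => ci_fun j (fmap F h u)) t.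

Lemma comp_pl_nat (j : comp_idx) X Y (h : X -> Y) (f : Y -> ci_arity j -> V)
  (t : fcomp G F X) :
  comp_pl j X (fun x => f (h x)) t = comp_pl j Y f (fmap (fcomp G F) h t).
Proof.
  unfold comp_pl. cbn. rewrite <- pl_nat. f_equal.
  apply functional_extensionality. intro u. now rewrite fmap_comp.
Qed.

Definition comp_class : plclass V (fcomp G F) :=
  PLClass (fun j => PredLift (comp_pl_nat j)).

Lemma fmap_yoneda_reflect {X : Type} {a : X -> X -> V} : is_vcat a ->
  forall u v, qle (LF (X -> V) (@powV V X) (fmap F (fun x z => a z x) u)
                     (fmap F (fun x z => a z x) v))
                  (LF X a u v).
Proof.
  destruct LF_kantorovich as [_ [LamF LF_eq]].
  intros a_vcat u v.
  rewrite (LF_eq X a a_vcat), (LF_eq _ _ (powV_vcat X)).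
  exact (kantorovich_reflect LamF (powV_vcat X) (yoneda_reflect a_vcat) u v).
Qed.

Lemma kantorovich_le_comp {X : Type} {a : X -> X -> V} (s t : G (F X)) :
  is_vcat a ->
  qle (kantorovich LamG (LF X a) s t) (kantorovich comp_class a s t).
Proof.
  destruct LF_kantorovich as [[LF_vcat LF_vf] _].
  intro a_vcat. apply qinf_glb. intros r [[i Z g g_vf] [h [h_vf ->]]].
  apply qinf_lb. exists i, (fun u => g (fmap F h u)). split; [|reflexivity].
  intros u v. eapply qle_trans; [|apply g_vf].
  apply LF_vf; auto using powV_vcat.
Qed.

Lemma comp_le_kantorovich {X : Type} {a : X -> X -> V} (s t : G (F X)) :
  is_vcat a ->
  qle (kantorovich comp_class a s t) (kantorovich LamG (LF X a) s t).
Proof.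
  destruct LF_kantorovich as [[LF_vcat _] _].
  intro a_vcat. apply qinf_glb. intros r [i [g [g_vf ->]]].
  set (y := fun x z : X => a z x).
  destruct (powV_extend (LF_vcat _ _ (powV_vcat X))
              (fmap_yoneda_reflect a_vcat) g_vf) as [g' [g'_vf g'_ext]].
  apply qinf_lb. exists (CompIdx i X g' g'_vf), y.
  split; [exact (yoneda_vfunctor a_vcat)|].
  unfold comp_class, comp_pl. cbn.
  replace (fun u => g' (fmap F y u)) with g; [reflexivity|].
  apply functional_extensionality. intro u. now rewrite g'_ext.
Qed.

End Composite.

Theorem corollary2 (V : quantale) (HV : nontrivial V) (F G : functor)
  (LF : lifting_on V F) (LG : lifting_on V G) :
  is_kantorovich_lifting LF -> is_kantorovich_lifting LG ->
  is_kantorovich_lifting (lift_comp LG LF).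
Proof.
  intros LF_kantorovich [LG_lifting [LamG LG_eq]].
  split; [exact (lift_comp_is_lifting (proj1 LF_kantorovich) LG_lifting)|].
  exists (comp_class LF LamG). intros X a a_vcat s t.
  unfold lift_comp.
  rewrite (LG_eq _ _ (proj1 (proj1 LF_kantorovich) X a a_vcat)).
  apply qle_antisym.
  - exact (kantorovich_le_comp LF LF_kantorovich LamG s t a_vcat).
  - exact (comp_le_kantorovich LF LF_kantorovich LamG s t a_vcat).
Qed.
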